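(* For every $\alpha>0$ there exist constants $K,\kappa>0$, depending only on $\alpha$, such that the following holds. For all $0<\beta\le1$, all $N,m\ge1$, and all strictly increasing $m$-tuples $p=(p_1<\dots<p_m)$ and $q=(q_1<\dots<q_m)$ of integers in $[1,N]$ with $|p-q|_1\ge\alpha N$, $$Z_\beta(p,q)\le(K/\beta)^{2m}e^{-\kappa\beta N}.$$
   Context: Here $|p-q|_1=\sum_a|p_a-q_a|$ and $$Z_\beta(p,q)=\sum_{\sigma\in S_m}e^{-\beta E_\sigma(p,q)},\qquad E_\sigma(p,q)=\sum_{a=1}^m|p_a-q_{\sigma(a)}|,$$ where $S_m$ is the symmetric group on $m$ elements. *)

From mathcomp Require Import all_boot all_fingroup.
From Stdlib Require Import Reals.

Set Implicit Arguments.
Unset Strict Implicit.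
Unset Printing Implicit Defensive.

(* A configuration: an m-tuple of integers, indexed by 'I_m (0-based). *)

Definition incr_in (N m : nat) (p : 'I_m -> nat) : Prop :=
  (forall i j : 'I_m, (i < j)%N -> (p i < p j)%N) /\
  (forall i : 'I_m, (1 <= p i)%N /\ (p i <= N)%N).

Definition l1dist (m : nat) (p q : 'I_m -> nat) : R :=
  \big[Rplus/0%R]_(a : 'I_m) Rabs (INR (p a) - INR (q a)).

Definition energy (m : nat) (s : 'S_m) (p q : 'I_m -> nat) : R :=
  \big[Rplus/0%R]_(a : 'I_m) Rabs (INR (p a) - INR (q (s a))).

Definition Zbeta (beta : R) (m : nat) (p q : 'I_m -> nat) : R :=
  \big[Rplus/0%R]_(s : 'S_m) exp (- (beta * energy s p q)).

(* Write t = beta/2 and split the Boltzmann weight e^(-beta E) = e^(-t E) e^(-t E).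
   1. Rearrangement: for nondecreasing p and q the identity permutation minimises
      the energy, E_sigma(p,q) >= |p-q|_1 >= alpha N.  Hence one factor is at most
      e^(-t alpha N), and Z_beta <= e^(-(beta/2) alpha N) Z_(beta/2).
   2. Expanding e^(-t E_sigma) as a product over a, the sum over permutations is at
      most the sum over all maps 'I_m -> 'I_m, i.e. the product of the row sums
      sum_b e^(-t |p_a - q_b|).
   3. Since the q_b are distinct integers, each row sum is at most the two-sided
      geometric series 2 (1+t)/t = 4/beta + 2 <= 6/beta. *)

From HB Require Import structures.
From mathcomp Require Import all_boot all_fingroup.
From Stdlib Require Import Reals Lra.

Set Implicit Arguments.
Unset Strict Implicit.

Delimit Scope nat_scope with N.

(* Stdlib's Rplus and Rmult as commutative monoids, so that bigop lemmas
   (splitting, distributivity, reindexing) apply to the sums. *)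
Lemma RplusA : associative Rplus. Proof. by move=> x y z; rewrite Rplus_assoc. Qed.
Lemma RmultA : associative Rmult. Proof. by move=> x y z; rewrite Rmult_assoc. Qed.
HB.instance Definition _ :=
  Monoid.isComLaw.Build R 0%R Rplus RplusA Rplus_comm Rplus_0_l.
HB.instance Definition _ :=
  Monoid.isComLaw.Build R 1%R Rmult RmultA Rmult_comm Rmult_1_l.
HB.instance Definition _ := Monoid.isMulLaw.Build R 0%R Rmult Rmult_0_l Rmult_0_r.
HB.instance Definition _ :=
  Monoid.isAddLaw.Build R Rmult Rplus Rmult_plus_distr_r Rmult_plus_distr_l.

Local Open Scope R_scope.

Lemma sum_le (I : Type) (r : seq I) (P : pred I) (F G : I -> R) :
  (forall i, P i -> F i <= G i) ->
  \big[Rplus/0]_(i <- r | P i) F i <= \big[Rplus/0]_(i <- r | P i) G i.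
Proof.
move=> FG; apply: (big_ind2 Rle) => //; first exact: Rle_refl.
by move=> *; apply: Rplus_le_compat.
Qed.

Lemma sum_ge0 (I : Type) (r : seq I) (P : pred I) (F : I -> R) :
  (forall i, P i -> 0 <= F i) -> 0 <= \big[Rplus/0]_(i <- r | P i) F i.
Proof.
move=> F0; apply: (big_ind (Rle 0)) => //; first exact: Rle_refl.
by move=> *; apply: Rplus_le_le_0_compat.
Qed.

Lemma sum_subset_le (I : finType) (A : pred I) (F : I -> R) :
  (forall i, 0 <= F i) -> \big[Rplus/0]_(i in A) F i <= \big[Rplus/0]_i F i.
Proof.
move=> F0; rewrite big_mkcond /=; apply: sum_le => i _.
by case: (i \in A); [apply: Rle_refl | apply: F0].
Qed.

Lemma prod_le (I : Type) (r : seq I) (P : pred I) (F G : I -> R) :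
  (forall i, P i -> 0 <= F i <= G i) ->
  \big[Rmult/1]_(i <- r | P i) F i <= \big[Rmult/1]_(i <- r | P i) G i.
Proof.
move=> FG; suff [] : 0 <= \big[Rmult/1]_(i <- r | P i) F i
                        <= \big[Rmult/1]_(i <- r | P i) G i by [].
apply: (big_ind2 (fun x y => 0 <= x <= y)) => //; first lra.
move=> x1 x2 y1 y2 [? ?] [? ?]; split; first exact: Rmult_le_pos.
exact: Rmult_le_compat.
Qed.

Lemma prod_const (m : nat) (c : R) : \big[Rmult/1]_(i < m) c = c ^ m.
Proof.
elim: m => [|m IH]; first by rewrite big_ord0.
by rewrite big_ord_recr IH /= Rmult_comm.
Qed.

Lemma exp_monotone (x y : R) : x <= y -> exp x <= exp y.
Proof. by case=> [/exp_increasing/Rlt_le | ->]; last apply: Rle_refl. Qed.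

Lemma exp_neg_scaled_sum (t : R) (I : Type) (r : seq I) (P : pred I) (F : I -> R) :
  exp (- (t * \big[Rplus/0]_(i <- r | P i) F i)) =
  \big[Rmult/1]_(i <- r | P i) exp (- (t * F i)).
Proof.
apply: (big_morph (fun x => exp (- (t * x)))) => [x y|].
  by rewrite -exp_plus; congr exp; ring.
by rewrite Rmult_0_r Ropp_0 exp_0.
Qed.

Section GeometricSums.
Variable t : R.

Definition geom_sum (n : nat) : R := \big[Rplus/0]_(k < n) exp (- (t * INR k)).

Definition dist_sum (n x : nat) : R :=
  \big[Rplus/0]_(j < n) exp (- (t * Rabs (INR x - INR j))).

Lemma geom_sum_ge0 (n : nat) : 0 <= geom_sum n.
Proof. by apply: sum_ge0 => k _; apply: Rlt_le; apply: exp_pos. Qed.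

Lemma geom_sumS (n : nat) : geom_sum n.+1 = geom_sum n + exp (- (t * INR n)).
Proof. by rewrite /geom_sum big_ord_recr. Qed.

Lemma geom_sum_closed (n : nat) :
  (1 - exp (- t)) * geom_sum n = 1 - exp (- (t * INR n)).
Proof.
elim: n => [|n IH].
  by rewrite /geom_sum big_ord0 /= Rmult_0_r Rmult_0_r Ropp_0 exp_0; ring.
rewrite geom_sumS Rmult_plus_distr_l IH S_INR.
have -> : - (t * (INR n + 1)) = - (t * INR n) + - t by ring.
rewrite exp_plus; ring.
Qed.

(* Since e^(-t) <= 1/(1+t), the whole series is at most 1/(1-e^(-t)) <= (1+t)/t. *)
Lemma geom_sum_le (n : nat) : 0 < t -> geom_sum n <= (1 + t) / t.
Proof.
move=> t_gt0.
have decay : exp (- t) <= / (1 + t).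
  rewrite exp_Ropp; apply: Rinv_le_contravar; first lra.
  by apply: Rlt_le; apply: exp_ineq1; lra.
have gap : t / (1 + t) <= 1 - exp (- t).
  have -> : t / (1 + t) = 1 - / (1 + t) by field; lra.
  lra.
have gap_pos : 0 < t / (1 + t) by apply: Rdiv_lt_0_compat; lra.
have closed := geom_sum_closed n; have := exp_pos (- (t * INR n)).
have := geom_sum_ge0 n.
have -> : (1 + t) / t = / (t / (1 + t)) by field; lra.
move=> G0 E0; apply: (Rmult_le_reg_l (t / (1 + t))) => //.
rewrite Rinv_r; last lra.
have : t / (1 + t) * geom_sum n <= (1 - exp (- t)) * geom_sum n.
  exact: Rmult_le_compat_r.
lra.
Qed.

(* Splitting j < x+1 and j >= x+1: the distances |x - j| run through two
   geometric progressions, so dist_sum n x <= geom_sum (x+1) + geom_sum n. *)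
Lemma dist_sum_split (x n : nat) : dist_sum n x <= geom_sum x.+1 + geom_sum n.
Proof.
elim: x n => [|x IH] n.
  have -> : dist_sum n 0 = geom_sum n.
    apply: eq_bigr => j _; congr (exp (- (t * _))).
    by rewrite Rminus_0_l Rabs_Ropp Rabs_pos_eq //; apply: pos_INR.
  have := geom_sum_ge0 1; lra.
case: n => [|n].
  rewrite /dist_sum big_ord0; have := geom_sum_ge0 x.+2; have := geom_sum_ge0 0; lra.
have shift : \big[Rplus/0]_(j < n) exp (- (t * Rabs (INR x.+1 - INR (lift ord0 j))))
             = dist_sum n x.
  apply: eq_bigr => j _; change (INR (lift ord0 j)) with (INR j.+1); rewrite !S_INR.
  by have -> : INR x + 1 - (INR j + 1) = INR x - INR j by ring.
rewrite /dist_sum big_ord_recl shift.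
change (INR (nat_of_ord (@ord0 n))) with 0; rewrite Rminus_0_r Rabs_pos_eq; last exact: pos_INR.
rewrite geom_sumS (geom_sumS n).
have := IH n; have := exp_pos (- (t * INR n)); lra.
Qed.

Lemma dist_sum_le (n x : nat) : 0 < t -> dist_sum n x <= 2 * (1 + t) / t.
Proof.
move=> t_gt0; have := dist_sum_split x n.
have := geom_sum_le x.+1 t_gt0; have := geom_sum_le n t_gt0.
have -> : 2 * (1 + t) / t = (1 + t) / t + (1 + t) / t by field; lra.
lra.
Qed.

End GeometricSums.

Lemma two_by_two_exchange (x x' y y' : R) : x <= x' -> y <= y' ->
  Rabs (x - y) + Rabs (x' - y') <= Rabs (x - y') + Rabs (x' - y).
Proof. by move=> ? ?; rewrite /Rabs; repeat case: Rcase_abs; lra. Qed.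

Section Rearrangement.
Variables (m : nat) (p q : 'I_m -> nat).
Hypothesis p_mono : forall i j : 'I_m, (i < j)%N -> (p i <= p j)%N.
Hypothesis q_mono : forall i j : 'I_m, (i < j)%N -> (q i <= q j)%N.

Let moved (s : 'S_m) : nat := #|[pred x | s x != x]|.

(* Let a be the smallest point moved by s.  Composing s with the transposition
   of a and s^-1 a fixes a as well, keeps all other fixed points, and by the
   exchange inequality does not increase the energy. *)
Lemma fix_least_moved (s : 'S_m) (a : 'I_m) :
  s a != a -> (forall c, s c != c -> (a <= c)%N) ->
  let s' := (tperm a ((s^-1)%g a) * s)%g in
  energy s' p q <= energy s p q /\ (moved s' < moved s)%N.
Proof.
move=> sa_a a_min s'; set b := (s^-1)%g a.
have sb : s b = a by rewrite /b permKV.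
have b_a : b != a by apply/eqP => ba; move: sa_a; rewrite -ba sb ba eqxx.
have s'a : s' a = a by rewrite permM tpermL.
have s'b : s' b = s a by rewrite permM tpermR.
have s'x x : x != a -> x != b -> s' x = s x by move=> ? ?; rewrite permM tpermD // eq_sym.
split.
- have split_ab (g : 'I_m -> R) : \big[Rplus/0]_x g x =
      g a + (g b + \big[Rplus/0]_(x | (x != a) && (x != b)) g x).
    by rewrite (bigD1 a) //= (bigD1 b).
  rewrite /energy split_ab [X in _ <= X]split_ab s'a s'b sb.
  rewrite (eq_bigr (fun x => Rabs (INR (p x) - INR (q (s x))))); last first.
    by move=> x /andP [? ?]; rewrite s'x.
  have a_b : (a < b)%N by rewrite ltn_neqAle eq_sym b_a a_min // sb eq_sym.
  have a_sa : (a < s a)%N.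
    rewrite ltn_neqAle eq_sym sa_a a_min //.
    by apply/eqP => /perm_inj sa; move: sa_a; rewrite sa eqxx.
  have := two_by_two_exchange (le_INR _ _ (leP (p_mono a_b)))
                              (le_INR _ _ (leP (q_mono a_sa))).
  set rest := \big[Rplus/0]_(x | _) _; lra.
- apply: proper_card; apply/properP; split; last by exists a; rewrite !inE ?s'a ?eqxx.
  apply/subsetP => x; rewrite !inE.
  case: (eqVneq x a) => [->|x_a]; first by rewrite s'a eqxx.
  case: (eqVneq x b) => [->|x_b]; first by move=> _; rewrite sb eq_sym.
  by rewrite s'x.
Qed.

Lemma l1dist_le_energy (s : 'S_m) : l1dist p q <= energy s p q.
Proof.
suff fewer_moved n (s' : 'S_m) : (moved s' <= n)%N -> l1dist p q <= energy s' p q.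
  exact: fewer_moved (leqnn _).
elim: n s' => [|n IH] {}s hn.
all: case: (pickP [pred x | s x != x]) => [a0 moved_a0 | no_moved].
- move: hn; rewrite leqn0 => /eqP/card0_eq/(_ a0); rewrite !inE /=.
  by move: moved_a0 => /= ->.
- 1,3: apply: Req_le; apply: eq_bigr => a _.
  1,2: by move/negbT: (no_moved a); rewrite negbK => /eqP ->.
- have [a moved_a a_min] := arg_minnP (fun x : 'I_m => nat_of_ord x) moved_a0.
  have [E_le fewer] := fix_least_moved moved_a a_min.
  apply: Rle_trans E_le; apply: IH.
  by rewrite -ltnS; apply: leq_trans fewer hn.
Qed.

End Rearrangement.

(* For nonnegative weights, the sum over permutations of prod_a w a (s a)
   is at most the sum over all maps, which is the product of the row sums. *)
Lemma perm_sum_le_prod_row_sums (m : nat) (w : 'I_m -> 'I_m -> R) :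
  (forall a b, 0 <= w a b) ->
  \big[Rplus/0]_(s : 'S_m) \big[Rmult/1]_a w a (s a) <=
  \big[Rmult/1]_a \big[Rplus/0]_b w a b.
Proof.
move=> w0; rewrite bigA_distr_bigA.
pose G (f : {ffun 'I_m -> 'I_m}) := \big[Rmult/1]_a w a (f a).
have -> : \big[Rplus/0]_(s : 'S_m) \big[Rmult/1]_a w a (s a) =
          \big[Rplus/0]_(f in (@pval _) @: [set: 'S_m]) G f.
  rewrite big_imset /=; last by move=> s s' _ _; apply: val_inj.
  apply: eq_big => [s|s _]; first by rewrite inE.
  by apply: eq_bigr => a _; rewrite pvalE.
apply: sum_subset_le => f; apply: (big_ind (Rle 0)) => //; first lra.
by move=> *; apply: Rmult_le_pos.
Qed.

(* A row sum over distinct integer positions q b <= N is dominated by the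
   sum over all integers 0..N, hence by the two-sided geometric bound. *)
Lemma row_sum_le (N m : nat) (q : 'I_m -> nat) (t : R) (x : nat) :
  0 < t -> injective q -> (forall b, (q b <= N)%N) ->
  \big[Rplus/0]_(b : 'I_m) exp (- (t * Rabs (INR x - INR (q b)))) <= 2 * (1 + t) / t.
Proof.
move=> t_gt0 q_inj q_le.
pose h b : 'I_N.+1 := inord (q b).
have hq b : nat_of_ord (h b) = q b by rewrite /h inordK // ltnS.
have h_inj : injective h by move=> b b' hb; apply: q_inj; rewrite -hq hb hq.
pose F (j : 'I_N.+1) := exp (- (t * Rabs (INR x - INR j))).
have -> : \big[Rplus/0]_b exp (- (t * Rabs (INR x - INR (q b)))) =
          \big[Rplus/0]_(j in h @: [set: 'I_m]) F j.
  rewrite big_imset /=; last by move=> b b' _ _; apply: h_inj.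
  by apply: eq_big => [b|b _]; rewrite ?inE // /F hq.
apply: Rle_trans (dist_sum_le N.+1 x t_gt0).
by apply: sum_subset_le => j; apply: Rlt_le; apply: exp_pos.
Qed.

Lemma Zbeta_le_geometric (t : R) (N m : nat) (p q : 'I_m -> nat) :
  0 < t -> injective q -> (forall b, (q b <= N)%N) ->
  Zbeta t p q <= (2 * (1 + t) / t) ^ m.
Proof.
move=> t_gt0 q_inj q_le.
pose w a b := exp (- (t * Rabs (INR (p a) - INR (q b)))).
rewrite /Zbeta /energy (eq_bigr _ (fun s _ => exp_neg_scaled_sum _ _ _ _)).
apply: Rle_trans (@perm_sum_le_prod_row_sums m w _) _.
  by move=> a b; apply: Rlt_le; apply: exp_pos.
rewrite -prod_const; apply: prod_le => a _; split; last exact: row_sum_le q_le.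
by apply: sum_ge0 => b _; apply: Rlt_le; apply: exp_pos.
Qed.

(* Step 1: half of the Boltzmann weight pays for the minimal energy |p-q|_1. *)
Lemma Zbeta_le_half (beta : R) (m : nat) (p q : 'I_m -> nat) :
  0 < beta ->
  (forall i j : 'I_m, (i < j)%N -> (p i <= p j)%N) ->
  (forall i j : 'I_m, (i < j)%N -> (q i <= q j)%N) ->
  Zbeta beta p q <= exp (- (beta / 2 * l1dist p q)) * Zbeta (beta / 2) p q.
Proof.
move=> beta_gt0 p_mono q_mono; rewrite /Zbeta big_distrr /=.
apply: sum_le => s _.
have -> : - (beta * energy s p q) = - (beta / 2 * energy s p q) + - (beta / 2 * energy s p q)
  by field.
rewrite exp_plus; apply: Rmult_le_compat_r; first exact: Rlt_le (exp_pos _).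
apply: exp_monotone; apply: Ropp_le_contravar; apply: Rmult_le_compat_l; first lra.
exact: l1dist_le_energy.
Qed.

Lemma incr_injective (m : nat) (q : 'I_m -> nat) :
  (forall i j : 'I_m, (i < j)%N -> (q i < q j)%N) -> injective q.
Proof.
move=> q_incr i j qij; apply/val_inj/eqP; case: ltngtP => // ij.
all: by move: (q_incr _ _ ij); rewrite qij ltnn.
Qed.

Theorem mainTheorem12 :
  forall alpha : R, (0 < alpha)%R ->
  exists K kappa : R, (0 < K)%R /\ (0 < kappa)%R /\
  forall beta : R, (0 < beta)%R -> (beta <= 1)%R ->
  forall (N m : nat), (1 <= N)%N -> (1 <= m)%N ->
  forall p q : 'I_m -> nat,
    incr_in N p -> incr_in N q ->
    (alpha * INR N <= l1dist p q)%R ->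
    (Zbeta beta p q <= (K / beta) ^ (2 * m) * exp (- (kappa * beta * INR N)))%R.
Proof.
move=> alpha alpha_gt0; exists 6, (alpha / 2); split; first lra; split; first lra.
move=> beta beta_gt0 beta_le1 N m _ _ p q [p_incr _] [q_incr q_range] far.
have half_gt0 : 0 < beta / 2 by lra.
have K_ge1 : 1 <= 6 / beta.
  by apply: (Rmult_le_reg_r beta) => //; rewrite /Rdiv Rmult_assoc Rinv_l; lra.
have geometric : 2 * (1 + beta / 2) / (beta / 2) <= 6 / beta.
  have -> : 2 * (1 + beta / 2) / (beta / 2) = 4 / beta + 2 by field; lra.
  have -> : 6 / beta = 4 / beta + 2 * / beta by field; lra.
  have : 1 <= / beta by rewrite -Rinv_1; apply: Rinv_le_contravar; lra.
  lra.
apply: Rle_trans (Zbeta_le_half beta_gt0 (fun i j ij => ltnW (p_incr i j ij))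
                                (fun i j ij => ltnW (q_incr i j ij))) _.
rewrite Rmult_comm; apply: Rmult_le_compat.
- by apply: sum_ge0 => s _; apply: Rlt_le; apply: exp_pos.
- exact: Rlt_le (exp_pos _).
- have q_le b : (q b <= N)%N by case: (q_range b).
  apply: Rle_trans (Zbeta_le_geometric p half_gt0 (incr_injective q_incr) q_le) _.
  apply: Rle_trans (_ : (6 / beta) ^ m <= _).
    apply: pow_incr; split => //; apply: Rlt_le; apply: Rdiv_lt_0_compat; lra.
  by apply: Rle_pow => //; apply/leP; rewrite mul2n -addnn leq_addr.
- apply: exp_monotone; apply: Ropp_le_contravar.
  have -> : alpha / 2 * beta * INR N = beta / 2 * (alpha * INR N) by field.
  by apply: Rmult_le_compat_l; lra.
Qed.
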